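(* Under the standing assumptions, let $\{x_i\}_{i=1}^N$ be a solution of the delayed Hegselmann–Krause system, and let $C\in(0,1)$ be as defined below. Put $\tilde C:=1-e^{-K\bar\tau}(1-C)\in(0,1)$. Then $D_{n+1}\le\tilde C\,D_{n-2}$ for all integers $n\ge2$, and consequently $D_{3n}\le\tilde C^{\,n}D_0$ for all $n\in\mathbb{N}_0$.
   Context: Standing assumptions: $N\ge 2$, $d\ge 1$, $\bar\tau>0$; $\tau:[0,\infty)\to[0,\bar\tau]$ continuous; $\psi:\mathbb{R}^d\times\mathbb{R}^d\to\mathbb{R}$ continuous, bounded and strictly positive, $K:=\|\psi\|_\infty$; initial data $x_i^0:[-\bar\tau,0]\to\mathbb{R}^d$ continuous. The delayed Hegselmann–Krause system is $$\frac{d}{dt}x_i(t)=\frac{1}{N-1}\sum_{j\ne i}\psi\big(x_i(t),x_j(t-\tau(t))\big)\big(x_j(t-\tau(t))-x_i(t)\big),\quad t>0,$$ with $x_i=x_i^0$ on $[-\bar\tau,0]$; a solution means continuous $x_i:[-\bar\tau,\infty)\to\mathbb{R}^d$, differentiable on $(0,\infty)$, satisfying this. For $n\in\mathbb{N}_0$, $D_n:=\max_{i,j=1,\dots,N}\max_{s,t\in[n\bar\tau-\bar\tau,\,n\bar\tau]}|x_i(s)-x_j(t)|$. $M^0:=\max_{i}\max_{s\in[-\bar\tau,0]}|x_i(s)|$, $\psi_0:=\min_{|y|,|z|\le M^0}\psi(y,z)$, and $C:=\max\{1-e^{-2K\bar\tau},\ 1-\frac{\psi_0}{K}(1-e^{-K\bar\tau})\}$.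 *)

From HB Require Import structures.
From mathcomp Require Import all_boot all_order all_algebra.
From mathcomp Require Import all_classical all_reals all_analysis.
Set Implicit Arguments. Unset Strict Implicit. Unset Printing Implicit Defensive.
Import Order.TTheory GRing.Theory Num.Theory.
Import numFieldNormedType.Exports.
Local Open Scope classical_set_scope.
Local Open Scope ring_scope.

Definition enorm {R : realType} {d : nat} (v : 'rV[R]_d) : R :=
  Num.sqrt (\sum_(k < d) (v ord0 k) ^+ 2).

Definition Ksup {R : realType} {d : nat} (psi : 'rV[R]_d -> 'rV[R]_d -> R) : R :=
  sup [set r | exists y z, r = `|psi y z|].

Definition Dn {R : realType} {d N : nat} (x : 'I_N -> R -> 'rV[R]_d) (tb : R)
  (n : nat) : R :=
  sup [set r | exists (i j : 'I_N) (s t : R),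
        s \in `[n%:R * tb - tb, n%:R * tb] /\ t \in `[n%:R * tb - tb, n%:R * tb] /\
        r = enorm (x i s - x j t)].

Definition M0 {R : realType} {d N : nat} (x : 'I_N -> R -> 'rV[R]_d) (tb : R) : R :=
  sup [set r | exists (i : 'I_N) (s : R), s \in `[- tb, 0] /\ r = enorm (x i s)].

Definition psi0 {R : realType} {d N : nat} (psi : 'rV[R]_d -> 'rV[R]_d -> R)
  (x : 'I_N -> R -> 'rV[R]_d) (tb : R) : R :=
  inf [set r | exists y z, enorm y <= M0 x tb /\ enorm z <= M0 x tb /\ r = psi y z].

Definition Cconst {R : realType} {d N : nat} (psi : 'rV[R]_d -> 'rV[R]_d -> R)
  (x : 'I_N -> R -> 'rV[R]_d) (tb : R) : R :=
  Num.max (1 - expR (- (2 * Ksup psi * tb)))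
          (1 - psi0 psi x tb / Ksup psi * (1 - expR (- (Ksup psi * tb)))).

Definition hk_rhs {R : realType} {d N : nat} (psi : 'rV[R]_d -> 'rV[R]_d -> R)
  (tau : R -> R) (x : 'I_N -> R -> 'rV[R]_d) (i : 'I_N) (t : R) : 'rV[R]_d :=
  (N.-1)%:R^-1 *: \sum_(j < N | j != i)
     psi (x i t) (x j (t - tau t)) *: (x j (t - tau t) - x i t).

From HB Require Import structures.
From mathcomp Require Import all_boot all_order all_algebra.
From mathcomp Require Import all_classical all_reals all_analysis.
From mathcomp Require Import ring lra.
Import Order.TTheory GRing.Theory Num.Theory.
Import numFieldNormedType.Exports.
Local Open Scope classical_set_scope.
Local Open Scope ring_scope.

(* Projecting the system onto a fixed direction v, the scalars p_k(t) = <x_k(t), v>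
   solve a delayed consensus system  p_l' = sum_{j <> l} w_lj (p_j(t - tau t) - p_l)
   with weights w_lj = psi(..)/(N-1) whose row sums are at most K and which are at
   least psi_0/(N-1), because a maximum principle keeps every agent in the ball of
   radius M^0.  For such a system the range [m, M] of the values on one window of
   length tb stays invariant, and comparing M - p_i and p_j - m with the linear
   equation y' = c - K y shows that two windows later p_i(s) - p_j(t) <= C~ (M - m).
   For v = x_i(s) - x_j(t) the left side is |v|^2 and M - m <= D_{n-2} |v|. *)

Lemma nbhs_ball_ex {R : realType} {P : R -> Prop} {x : R} :
  (\forall t \near x, P t) -> exists2 e, 0 < e & forall t, `|x - t| < e -> P t.
Proof. by move=> /nbhs_ballP [e e0 H]; exists e => // t te; apply: H. Qed.

Lemma derive1_ge_of_left_le {R : realType} {f : R -> R} {a c k : R} : a < c ->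
  derivable f c 1 -> (forall t, a < t < c -> f t <= f c + k * (t - c)) ->
  k <= 'D_1 f c.
Proof.
move=> ac df fle.
rewrite ['D_1 f c]cvg_at_leftE; last exact: df.
apply: limr_ge.
  rewrite -(cvg_at_leftE (fun h => h^-1 *: ((f \o shift c) _ - f c))) //.
  apply: cvg_trans df; apply: cvg_app.
  move=> A [e e0 Ae]; exists e => // h he h0; apply: Ae => //.
  exact/ltr0_neq0.
near=> h.
have h0 : h < 0 by near: h; exists 1 => /=.
have hac : - h < c - a.
  near: h; exists (c - a); first by rewrite /= subr_gt0.
  by move=> h; rewrite /= distrC subr0 => /ltr_normlP [] ? ? _; lra.
have := fle (h + c); rewrite [_%:A]mulr1 addrK => /(_ ltac:(apply/andP; split; lra)) H.
rewrite -(ler_nM2l h0) mulrA divff ?ltr0_neq0 // mul1r /= mulrC; lra.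
Unshelve. all: by end_near. Qed.

Lemma le0_of_lt0_left {R : realType} {f : R -> R} {a c : R} : a < c ->
  {for c, continuous f} -> (forall t, a <= t < c -> f t < 0) -> f c <= 0.
Proof.
move=> ac cf neg; rewrite leNgt; apply/negP => fc.
have := cvgr_gt _ cf _ fc; move=> /(_ _) /nbhs_ball_ex [e e0 pos].
pose t := c - Num.min e (c - a) / 2.
have m1 : Num.min e (c - a) <= e by rewrite ge_min lexx.
have m2 : Num.min e (c - a) <= c - a by rewrite ge_min lexx orbT.
have m3 : 0 < Num.min e (c - a) by rewrite lt_min e0 subr_gt0 ac.
have := pos t; rewrite /t opprB addrC subrK ger0_norm; last lra.
move=> /(_ ltac:(lra)); have := neg t ltac:(apply/andP; split; rewrite /t; lra).
lra.
Qed.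

Lemma first_hitting_time {R : realType} {I : finType} {f : I -> R -> R} {a b : R} :
  (forall i t, a <= t -> {for t, continuous (f i)}) ->
  (forall i, f i a < 0) -> a <= b -> (exists i, 0 <= f i b) ->
  exists2 c, a < c & (exists i, f i c = 0) /\ (forall i t, a <= t <= c -> f i t <= 0).
Proof.
move=> cf fa0 ab [ib fb].
pose S := [set t | a <= t /\ exists i, 0 <= f i t].
have Sb : S b by split => //; exists ib.
have S_lb : has_lbound S by exists a => t [].
set c := inf S.
have c_le : forall t, S t -> c <= t := ge_inf S_lb.
have ac : a <= c by apply: lb_le_inf; [exists b | move=> t []].
have before_c : forall i t, a <= t < c -> f i t < 0.
  move=> i t /andP [ta tc]; rewrite ltNge; apply/negP => ft.
  by have := c_le t (conj ta (ex_intro _ i ft)); rewrite leNgt tc.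
have [i fc] : exists i, 0 <= f i c.
  apply: contrapT => /forallNP fc_neg.
  have : \forall t \near c, forall i, f i t < 0.
    apply: (@filter_forall R I (fun i t => f i t < 0) (nbhs c) _) => i.
    apply: (cvgr_lt _ (cf i c ac)).
    by rewrite ltNge; apply/negP => /(fc_neg i).
  move=> /nbhs_ball_ex [e e0 small].
  suff : c + e / 2 <= c by lra.
  apply: lb_le_inf; first by exists b.
  move=> t [ta [j ft]]; rewrite leNgt; apply/negP => te.
  have ct := c_le t (conj ta (ex_intro _ j ft)).
  have := small t; rewrite ler0_norm; last lra.
  by move=> /(_ ltac:(lra)) /(_ j); lra.
have {}ac : a < c.
  rewrite lt_neqAle ac andbT; apply/eqP => ca.
  by move: fc; rewrite -ca; have := fa0 i; lra.
exists c => //; split.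
  exists i; apply/eqP; rewrite eq_le fc andbT.
  by apply: (le0_of_lt0_left ac (cf i c (ltW ac))) => t /before_c.
move=> j t /andP [ta]; rewrite le_eqVlt => /predU1P [->|tc].
  by apply: (le0_of_lt0_left ac (cf j c (ltW ac))) => r /before_c.
by apply: ltW; apply: before_c; rewrite ta.
Qed.

Lemma gronwall_lower {R : realType} {f : R -> R} {K c a b : R} : 0 < K -> a <= b ->
  {within `[a, b], continuous f} ->
  (forall t, a < t < b -> derivable f t 1 /\ c - K * f t <= 'D_1 f t) ->
  expR (- (K * (b - a))) * f a + c / K * (1 - expR (- (K * (b - a)))) <= f b.
Proof.
move=> K0 ab cf df.
pose e := fun s : R => expR (K * s).
pose g := fun s : R => f s - c / K.
have de (t : R) : is_derive t 1 e (expR (K * t) * K).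
  apply: (@is_derive1_comp _ expR (fun s => K * s)).
  have -> : (fun s => K * s) = K \*: id by apply/funext.
  by apply: is_derive_eq (is_deriveZ K (@is_derive_id R R t 1)) _; rewrite [_%:A]mulr1.
have dg (t : R) : a < t < b -> is_derive t 1 g ('D_1 f t).
  move=> /df [dft _]; have -> : g = f - cst (c / K) by apply/funext.
  apply: is_derive_eq (is_deriveB (derivableP dft) (is_derive_cst (c / K) t 1)) _.
  by rewrite subr0.
(* [e * g] is nondecreasing: its derivative is [e * (f' + K f - c)]. *)
have eg_mono : e a * g a <= e b * g b.
  apply: (@ger0_derive1_ndecr R (e * g) a b) => // [t|t|].
  - by rewrite in_itv /= => /dg /(is_deriveM (de t)) [].
  - rewrite in_itv /= => tab; have [_ Deg] := is_deriveM (de t) (dg t tab).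
    rewrite derive1E Deg.
    have [_ h] := df t tab.
    have -> : e t *: 'D_1 f t + g t *: (expR (K * t) * K) =
              expR (K * t) * ('D_1 f t + K * f t - c).
      by rewrite /e /g /GRing.scale /=; field; rewrite gt_eqF.
    by rewrite mulr_ge0 ?expR_ge0 //; lra.
  - have ce : {within `[a, b], continuous e}.
      apply: continuous_subspaceT => t.
      by apply: continuous_comp; [exact: mulrl_continuous | exact: continuous_expR].
    by move=> t; apply: cvgM; [exact: ce | apply: cvgB; [exact: cf | exact: cvg_cst]].
have Eb : e b = e a * expR (K * (b - a)) by rewrite /e -expRD; congr expR; ring.
rewrite Eb -mulrA ler_pM2l ?expR_gt0 // /g in eg_mono.
rewrite expRN; set E := expR (K * (b - a)) in eg_mono *.
have E0 : 0 < E by exact: expR_gt0.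
have : E^-1 * (f a - c / K) <= f b - c / K by rewrite ler_pdivrMl.
rewrite mulrBr mulrBr mulr1 [c / K * E^-1]mulrC; lra.
Qed.

Definition dotv {R : realType} {d : nat} (a b : 'rV[R]_d) : R :=
  \sum_(k < d) a ord0 k * b ord0 k.

Section EuclideanRow.
Context {R : realType} {d : nat}.
Implicit Types a b c : 'rV[R]_d.

Lemma dotvBl a b c : dotv (a - b) c = dotv a c - dotv b c.
Proof. by rewrite /dotv -sumrB; apply: eq_bigr => k _; rewrite !mxE mulrBl. Qed.

Lemma dotvNl a c : dotv (- a) c = - dotv a c.
Proof. by rewrite /dotv -sumrN; apply: eq_bigr => k _; rewrite !mxE mulNr. Qed.

Lemma dotvZl (r : R) a c : dotv (r *: a) c = r * dotv a c.
Proof. by rewrite /dotv mulr_sumr; apply: eq_bigr => k _; rewrite !mxE mulrA. Qed.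

Lemma dotv_suml (I : finType) (P : pred I) (F : I -> 'rV[R]_d) c :
  dotv (\sum_(j | P j) F j) c = \sum_(j | P j) dotv (F j) c.
Proof.
by rewrite /dotv exchange_big; apply: eq_bigr => k _; rewrite summxE mulr_suml.
Qed.

Lemma enorm_ge0 a : 0 <= enorm a.
Proof. exact: sqrtr_ge0. Qed.

Lemma enorm_sqr a : enorm a ^+ 2 = dotv a a.
Proof.
rewrite /enorm sqr_sqrtr; last by apply: sumr_ge0 => k _; rewrite sqr_ge0.
by apply: eq_bigr => k _; rewrite expr2.
Qed.

Lemma enormN a : enorm (- a) = enorm a.
Proof. by congr Num.sqrt; apply: eq_bigr => k _; rewrite mxE sqrrN. Qed.

Lemma enorm_eq0_coord a k : enorm a = 0 -> a ord0 k = 0.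
Proof.
move=> a0; have := enorm_sqr a; rewrite a0 expr0n /= => /esym/eqP.
rewrite psumr_eq0 => [/allP/(_ k (mem_index_enum _))|j _]; last by rewrite -expr2 sqr_ge0.
by rewrite mulf_eq0 orbb => /eqP.
Qed.

Lemma dotv_le_enorm a b : dotv a b <= enorm a * enorm b.
Proof.
set al := enorm a; set be := enorm b.
have [ab0 | ab_gt0] : al * be = 0 \/ 0 < al * be.
  by rewrite lt_def mulr_ge0 ?enorm_ge0 // andbT; case: eqP; [left | right].
  rewrite ab0 /dotv big1 // => k _.
  by case/eqP: ab0; rewrite mulf_eq0 => /orP [] /eqP /enorm_eq0_coord ->;
    rewrite ?mul0r ?mulr0.
have amgm k : 2 * (al * be) * (a ord0 k * b ord0 k) <=
    be ^+ 2 * (a ord0 k * a ord0 k) + al ^+ 2 * (b ord0 k * b ord0 k).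
  by have := sqr_ge0 (be * a ord0 k - al * b ord0 k); nra.
have : \sum_(k < d) 2 * (al * be) * (a ord0 k * b ord0 k) <=
    \sum_(k < d) (be ^+ 2 * (a ord0 k * a ord0 k) + al ^+ 2 * (b ord0 k * b ord0 k)).
  by apply: ler_sum => k _; exact: amgm.
rewrite -mulr_sumr big_split /= -!mulr_sumr.
rewrite -/(dotv a b) -/(dotv a a) -/(dotv b b) -!enorm_sqr -/al -/be => H.
by rewrite -(ler_pM2l ab_gt0); nra.
Qed.

Lemma enormB_le a b : enorm (a - b) <= enorm a + enorm b.
Proof.
have [ab0 | ab_gt0] := eqVneq (enorm (a - b)) 0.
  by rewrite ab0 addr_ge0 ?enorm_ge0.
have ab_pos : 0 < enorm (a - b) by rewrite lt_def ab_gt0 enorm_ge0.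
rewrite -(ler_pM2r ab_pos) -expr2 enorm_sqr dotvBl mulrDl.
have := dotv_le_enorm a (a - b); have := dotv_le_enorm (- b) (a - b).
by rewrite dotvNl enormN; lra.
Qed.

Lemma dotv_continuous c : continuous (fun a => dotv a c).
Proof.
move=> a; apply: (cvg_big add_continuous (nbhs_filter a)) => k _.
exact: cvgM (@coord_continuous R 1 d ord0 k a) (cvg_cst _).
Qed.

Lemma enorm_continuous : continuous (@enorm R d).
Proof.
have -> : @enorm R d = Num.sqrt \o fun a => \sum_(k < d) a ord0 k ^+ 2 by [].
move=> a; apply: (continuous_comp _ (@sqrt_continuous R _)).
apply: (cvg_big add_continuous (nbhs_filter a)) => k _.
exact: (continuous_comp (@coord_continuous R 1 d ord0 k a) (@exprn_continuous R 2 _)).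
Qed.

Lemma is_derive_dotv {f : R -> 'rV[R]_d} c {t : R} :
  derivable f t 1 -> is_derive t 1 (fun s => dotv (f s) c) (dotv ('D_1 f t) c).
Proof.
move=> df.
have -> : (fun s => dotv (f s) c) = \sum_(k < d) (fun s => f s ord0 k * c ord0 k).
  by apply/funext => s; rewrite /dotv fct_sumE.
apply: is_derive_sum => k.
have dfk : is_derive t 1 (fun s => f s ord0 k) ('D_1 f t ord0 k).
  apply: DeriveDef; first exact: (derivable_mxP _ _ _).1 df ord0 k.
  by rewrite derive_mx // mxE.
have -> : (fun s => f s ord0 k * c ord0 k) = c ord0 k \*: (fun s => f s ord0 k).
  by apply/funext => s; rewrite /= mulrC.
by apply: is_derive_eq (is_deriveZ _ dfk) _; rewrite mulrC.
Qed.

End EuclideanRow.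

Section DelayedConsensus.
Context {R : realType}.
Variables (N : nat) (tau : R -> R) (tb : R) (w : 'I_N -> 'I_N -> R -> R).
Hypothesis tb_gt0 : 0 < tb.
Hypothesis tau_range : forall t, 0 <= t -> 0 <= tau t <= tb.
Hypothesis w_ge0 : forall l j t, 0 < t -> 0 <= w l j t.

Definition consensus_solution (p : 'I_N -> R -> R) : Prop :=
  (forall l t, - tb < t -> {for t, continuous (p l)}) /\
  (forall l t, 0 < t -> derivable (p l) t 1 /\
     'D_1 (p l) t = \sum_(j < N | j != l) w l j t * (p j (t - tau t) - p l t)).

Lemma consensus_solutionN p :
  consensus_solution p -> consensus_solution (fun l s => - p l s).
Proof.
move=> [cp dp]; split=> [l t /(cp l) /cvgN //|l t /(dp l) [dpl Dpl]].
have [dN ->] := is_deriveN (derivableP dpl); split => //.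
by rewrite Dpl -sumrN; apply: eq_bigr => j _; ring.
Qed.

Lemma consensus_solutionB p c :
  consensus_solution p -> consensus_solution (fun l s => p l s - c).
Proof.
move=> [cp dp]; split=> [l t /(cp l) cpl|l t /(dp l) [dpl Dpl]].
  by apply: cvgB => //; exact: cvg_cst.
have [dB ->] := is_deriveB (derivableP dpl) (is_derive_cst c t 1).
by split => //; rewrite subr0 Dpl; apply: eq_bigr => j _; ring.
Qed.

(* At a first contact time with the barrier the contact agent would move up at
   least at rate [eps], while every delayed value it is attracted to lies below
   the barrier. *)
Lemma consensus_lt_barrier {p T B eps} : consensus_solution p -> 0 <= T ->
  (forall l s, T - tb <= s <= T -> p l s <= B) -> 0 < eps ->
  forall l t, T <= t -> p l t < B + eps * (1 + t - T).
Proof.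
move=> [cp dp] T0 pB eps0; have tb0 := tb_gt0; have tbT : - tb < T by lra.
pose phi t := B + eps * (1 + t - T).
have phi_nondecr s t : s <= t -> phi s <= phi t.
  by move=> st; rewrite /phi lerD2l ler_pM2l //; lra.
have B_phi t : T <= t -> B <= phi t by move=> Tt; rewrite /phi lerDl; nra.
apply: contrapT => /existsNP [l1] /existsNP [t1] /not_implyP [Tt1] /negP.
rewrite -leNgt => ht1.
have cf l t : T <= t -> {for t, continuous (fun s => p l s - phi s)}.
  move=> Tt; apply: cvgB; first by apply: cp; exact: lt_le_trans tbT Tt.
  by apply: cvgD; [exact: cvg_cst | apply: cvgM; [exact: cvg_cst |
    apply: cvgB; [apply: cvgD; [exact: cvg_cst | exact: cvg_id] | exact: cvg_cst]]].
have fT l : p l T - phi T < 0.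
  have /(pB l) : T - tb <= T <= T by rewrite lexx andbT; lra.
  by have := B_phi T (lexx T); rewrite /phi; lra.
have hit : exists l, 0 <= p l t1 - phi t1 by exists l1; rewrite subr_ge0.
have [c Tc [[l pl] below]] := first_hitting_time cf fT Tt1 hit.
have c0 : 0 < c by lra.
have [dpl Dpl] := dp l c c0.
have : eps <= 'D_1 (p l) c.
  apply: (derive1_ge_of_left_le Tc dpl) => t /andP [Tt tc].
  have /(below l) : T <= t <= c by rewrite (ltW Tt) (ltW tc).
  by move: pl; rewrite /phi; lra.
suff : 'D_1 (p l) c <= 0 by lra.
rewrite Dpl; apply: sumr_le0 => j _; apply: mulr_ge0_le0; first exact: w_ge0.
have /andP [tau0 taub] := tau_range c (ltW c0).
rewrite subr_le0 (_ : p l c = phi c); last lra.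
have [Ttc|tcT] := leP T (c - tau c).
  have /(below j) : T <= c - tau c <= c by rewrite Ttc; lra.
  by have := phi_nondecr (c - tau c) c ltac:(lra); lra.
by apply: le_trans (B_phi c (ltW Tc)); apply: pB; apply/andP; split; lra.
Qed.

Lemma consensus_le_propagation {p T B} : consensus_solution p -> 0 <= T ->
  (forall l s, T - tb <= s <= T -> p l s <= B) ->
  forall l t, T - tb <= t -> p l t <= B.
Proof.
move=> sol T0 pB l t Tt; have [tT|Tt'] := leP t T; first by apply: pB; rewrite Tt tT.
apply/ler_addgt0Pr => e e0; have pos : 0 < 1 + t - T by lra.
have := consensus_lt_barrier sol T0 pB (divr_gt0 e0 pos) l t (ltW Tt').
by rewrite divfK ?gt_eqF // => /ltW.
Qed.

Lemma consensus_ge_propagation {p T B} : consensus_solution p -> 0 <= T ->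
  (forall l s, T - tb <= s <= T -> B <= p l s) ->
  forall l t, T - tb <= t -> B <= p l t.
Proof.
move=> /consensus_solutionN sol T0 pB l t Tt; rewrite -lerN2.
apply: (@consensus_le_propagation _ T (- B) sol T0) => // k s /pB.
by rewrite lerN2.
Qed.

Variable K : R.
Hypothesis K_gt0 : 0 < K.
Hypothesis w_sum_le : forall l t, 0 < t -> \sum_(j < N | j != l) w l j t <= K.

Lemma consensus_derive1_ge {p T} : consensus_solution p ->
  (forall l t, T - tb <= t -> 0 <= p l t) ->
  forall l t, 0 < t -> T <= t ->
  \sum_(k < N | k != l) w l k t * p k (t - tau t) - K * p l t <= 'D_1 (p l) t.
Proof.
move=> [_ dp] p0 l t t0 Tt; have [_ ->] := dp l t t0.
have -> : \sum_(j < N | j != l) w l j t * (p j (t - tau t) - p l t) =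
    \sum_(j < N | j != l) w l j t * p j (t - tau t) -
    (\sum_(j < N | j != l) w l j t) * p l t.
  by rewrite mulr_suml -sumrB; apply: eq_bigr => j _; ring.
by rewrite lerD2l lerN2 ler_wpM2r ?w_sum_le // p0 //; have := tb_gt0; lra.
Qed.

Lemma consensus_nonneg_decay {p T} : consensus_solution p -> 0 <= T ->
  (forall l t, T - tb <= t -> 0 <= p l t) ->
  forall l a b, T <= a -> a <= b -> expR (- (K * (b - a))) * p l a <= p l b.
Proof.
move=> sol T0 p0 l a b Ta ab; have tb0 := tb_gt0.
have := @gronwall_lower R (p l) K 0 a b K_gt0 ab; rewrite mul0r mul0r addr0; apply.
  apply: continuous_in_subspaceT => t; rewrite inE /= in_itv /= => /andP [ta _].
  by apply: sol.1; lra.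
move=> t /andP [ta tb']; have t0 : 0 < t by lra.
have Ta' : T < t by lra.
split; first by have [] := sol.2 l t t0.
apply: le_trans (consensus_derive1_ge sol p0 l t t0 (ltW Ta')).
rewrite lerD2r; apply: sumr_ge0 => k _; apply: mulr_ge0; first exact: w_ge0.
by apply: p0; have := tau_range t (ltW t0); lra.
Qed.

Variable wlo : R.
Hypothesis wlo_ge0 : 0 <= wlo.
Hypothesis w_ge_wlo : forall l j t, 0 < t -> j != l -> wlo <= w l j t.

Definition consensus_rate : R :=
  Num.min (expR (- (2 * K * tb))) (wlo * (N.-1)%:R / K * (1 - expR (- (K * tb)))).

Definition consensus_factor : R := 1 - expR (- (K * tb)) * consensus_rate.

Lemma consensus_factor_ge0 : 0 <= consensus_factor.
Proof.
have e1 : expR (- (K * tb)) <= 1 by rewrite expR_le1 oppr_le0 mulr_ge0 // ltW.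
have e2 : expR (- (2 * K * tb)) <= 1.
  by rewrite expR_le1 oppr_le0 !mulr_ge0 // ltW.
have r : consensus_rate <= expR (- (2 * K * tb)) by rewrite ge_min lexx.
rewrite subr_ge0; apply: le_trans (ler_wpM2l (expR_ge0 _) r) _.
by rewrite mulr_ile1 ?expR_ge0.
Qed.

Section Pair.
Variables (g h : 'I_N -> R -> R) (T D : R).
Hypotheses (g_sol : consensus_solution g) (h_sol : consensus_solution h).
Hypotheses (T_ge0 : 0 <= T).
Hypotheses (g_ge0 : forall l t, T - tb <= t -> 0 <= g l t).
Hypotheses (h_ge0 : forall l t, T - tb <= t -> 0 <= h l t).
Hypothesis gh_sum : forall l t, T - tb <= t -> g l t + h l t = D.

(* The delayed attraction of agent [i] towards the [g]-values and of agent [j]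
   towards the [h]-values adds up to at least [wlo (N-1) D], since the delayed
   values of all agents except [g_i + h_j] add up to [N D - (g_i + h_j)]. *)
Lemma consensus_pair_derive1_ge i j t : 0 < t -> T <= t ->
  g i (t - tau t) + h j (t - tau t) <= D ->
  derivable (g i + h j) t 1 /\
  wlo * (N.-1)%:R * D - K * (g i t + h j t) <= 'D_1 (g i + h j) t.
Proof.
move=> t0 Tt ghD; have [dgi _] := g_sol.2 i t t0; have [dhj _] := h_sol.2 j t t0.
split; first exact: derivableD.
rewrite deriveD //.
have Dg := consensus_derive1_ge g_sol g_ge0 i t t0 Tt.
have Dh := consensus_derive1_ge h_sol h_ge0 j t t0 Tt.
set t' := t - tau t in ghD Dg Dh *.
have Tt' : T - tb <= t' by have := tau_range t (ltW t0); rewrite /t'; lra.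
have Sg : wlo * \sum_(k < N | k != i) g k t' <= \sum_(k < N | k != i) w i k t * g k t'.
  rewrite mulr_sumr; apply: ler_sum => k ki.
  by rewrite ler_wpM2r ?g_ge0 ?w_ge_wlo.
have Sh : wlo * \sum_(k < N | k != j) h k t' <= \sum_(k < N | k != j) w j k t * h k t'.
  rewrite mulr_sumr; apply: ler_sum => k kj.
  by rewrite ler_wpM2r ?h_ge0 ?w_ge_wlo.
have Nsum : \sum_(k < N | k != i) g k t' + \sum_(k < N | k != j) h k t' =
    (N.-1)%:R * D + (D - (g i t' + h j t')).
  have gall : \sum_(k < N) g k t' = g i t' + \sum_(k < N | k != i) g k t'.
    by rewrite (bigD1 i).
  have hall : \sum_(k < N) h k t' = h j t' + \sum_(k < N | k != j) h k t'.
    by rewrite (bigD1 j).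
  have : \sum_(k < N) g k t' + \sum_(k < N) h k t' = N%:R * D.
    rewrite -big_split /= (eq_bigr (fun _ => D)) => [|k _]; last exact: gh_sum.
    by rewrite sumr_const card_ord mulr_natl.
  rewrite -[in N%:R](prednK (leq_ltn_trans (leq0n i) (ltn_ord i))) -natr1 /= gall hall.
  lra.
have : wlo * ((N.-1)%:R * D) <= wlo * ((N.-1)%:R * D + (D - (g i t' + h j t'))).
  by rewrite ler_wpM2l // lerDl subr_ge0.
rewrite -Nsum mulrDr mulrA; lra.
Qed.

Lemma consensus_pair_decay i j s u : T <= s -> s <= u -> u - s <= 2 * tb ->
  expR (- (2 * K * tb)) * (g i s + h j s) <= g i u + h j u.
Proof.
move=> Ts su us; have T0 := T_ge0.
have ee : expR (- (2 * K * tb)) <= expR (- (K * (u - s))).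
  by rewrite ler_expR lerN2 (mulrC 2) -mulrA ler_pM2l.
rewrite mulrDr; apply: lerD.
  apply: le_trans (consensus_nonneg_decay g_sol T_ge0 g_ge0 i s u Ts su).
  by rewrite ler_wpM2r // g_ge0 //; have := tb_gt0; lra.
apply: le_trans (consensus_nonneg_decay h_sol T_ge0 h_ge0 j s u Ts su).
by rewrite ler_wpM2r // h_ge0 //; have := tb_gt0; lra.
Qed.

(* Either [g_i + h_j] already exceeds [e^{-2 K tb} D] at [u], or it stayed below [D]
   during the two preceding windows and was then pushed up at rate [wlo (N-1) D]. *)
Lemma consensus_pair_lb i j u : T + 2 * tb <= u -> consensus_rate * D <= g i u + h j u.
Proof.
move=> Tu; have tb0 := tb_gt0; have T0 := T_ge0.
set e2 := expR (- (2 * K * tb)).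
have TT : T - tb <= T by lra.
have D0 : 0 <= D by rewrite -(gh_sum i T TT) addr_ge0 ?g_ge0 ?h_ge0.
have [big|small] := leP (e2 * D) (g i u + h j u).
  by apply: le_trans big; rewrite ler_wpM2r // ge_min lexx.
have below s : u - 2 * tb <= s <= u -> g i s + h j s < D.
  move=> /andP [s1 s2]; rewrite -(ltr_pM2l (expR_gt0 (- (2 * K * tb)))) -/e2.
  by apply: le_lt_trans small; apply: consensus_pair_decay; lra.
have cont : {within `[u - tb, u], continuous (g i + h j)}.
  apply: continuous_in_subspaceT => t; rewrite inE /= in_itv /= => /andP [t1 _].
  by apply: continuousD; [apply: g_sol.1 | apply: h_sol.1]; lra.
have der t : u - tb < t < u -> derivable (g i + h j) t 1 /\
    wlo * (N.-1)%:R * D - K * (g i + h j) t <= 'D_1 (g i + h j) t.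
  move=> /andP [t1 t2]; have t0 : 0 < t by lra.
  apply: consensus_pair_derive1_ge => //; first lra.
  apply: ltW; apply: below; have := tau_range t (ltW t0).
  by case/andP => ? ?; apply/andP; split; lra.
have uu : u - tb <= u by rewrite gerBl ltW.
have := gronwall_lower K_gt0 uu cont der; rewrite subKr; apply: le_trans.
set e1 := expR (- (K * tb)).
have f0 : 0 <= (g i + h j) (u - tb) by rewrite /= addr_ge0 // ?g_ge0 ?h_ge0 //; lra.
apply: le_trans (_ : wlo * (N.-1)%:R * D / K * (1 - e1) <= _); last first.
  by rewrite lerDr mulr_ge0 // expR_ge0.
rewrite (_ : wlo * (N.-1)%:R * D / K * (1 - e1) = wlo * (N.-1)%:R / K * (1 - e1) * D).
  by rewrite ler_wpM2r // ge_min lexx orbT.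
by ring.
Qed.
End Pair.

Lemma consensus_window_contraction p T m M : consensus_solution p -> 0 <= T ->
  (forall l s, T - tb <= s <= T -> m <= p l s <= M) ->
  forall i j s t, T + 2 * tb <= s <= T + 3 * tb -> T + 2 * tb <= t <= T + 3 * tb ->
  p i s - p j t <= consensus_factor * (M - m).
Proof.
move=> sol T0 pmM i j s t /andP [s1 s2] /andP [t1 t2]; have tb0 := tb_gt0.
have pm l r : T - tb <= r <= T -> m <= p l r /\ p l r <= M by move/(pmM l)/andP.
have up := consensus_le_propagation sol T0 (fun l r hr => (pm l r hr).2).
have lo := consensus_ge_propagation sol T0 (fun l r hr => (pm l r hr).1).
pose g l r := - p l r - - M; pose h l r := p l r - m.
have g_sol : consensus_solution g by apply/consensus_solutionB/consensus_solutionN.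
have h_sol : consensus_solution h by apply/consensus_solutionB.
have g0 l r : T - tb <= r -> 0 <= g l r by move=> /(up l); rewrite /g; lra.
have h0 l r : T - tb <= r -> 0 <= h l r by move=> /(lo l); rewrite /h; lra.
have gh l r : T - tb <= r -> g l r + h l r = M - m by rewrite /g /h => _; ring.
set u := Num.min s t.
have Tu : T + 2 * tb <= u by rewrite le_min s1 t1.
have lb := @consensus_pair_lb g h T (M - m) g_sol h_sol T0 g0 h0 gh i j u Tu.
have us : u <= s by rewrite ge_min lexx.
have ut : u <= t by rewrite ge_min lexx orbT.
have Tu' : T <= u by lra.
have dg := consensus_nonneg_decay g_sol T0 g0 i u s Tu' us.
have dh := consensus_nonneg_decay h_sol T0 h0 j u t Tu' ut.
set e1 := expR (- (K * tb)).
have e1_le r : u <= r <= T + 3 * tb -> e1 <= expR (- (K * (r - u))).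
  by move=> /andP [r1 r2]; rewrite ler_expR lerN2 ler_pM2l //; lra.
have {}dg : e1 * g i u <= g i s.
  by apply: le_trans dg; rewrite ler_wpM2r ?g0 ?e1_le ?us //; lra.
have {}dh : e1 * h j u <= h j t.
  by apply: le_trans dh; rewrite ler_wpM2r ?h0 ?e1_le ?ut //; lra.
have := ler_wpM2l (expR_ge0 (- (K * tb))) lb; rewrite -/e1.
rewrite /consensus_factor -/e1 /g /h in dg dh * => lb'.
lra.
Qed.
End DelayedConsensus.

Lemma ler_of_sqr_le_mul (R : realDomainType) (a c : R) :
  0 <= c -> a ^+ 2 <= c * a -> a <= c.
Proof.
move=> c0; have [a0 _|a_gt0] := leP a 0; first exact: le_trans a0 c0.
by rewrite expr2 ler_pM2r.
Qed.

Section HegselmannKrause.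
Context {R : realType} {N d : nat}.
Variables (tb : R) (tau : R -> R).
Variables (psi : 'rV[R]_d -> 'rV[R]_d -> R) (x : 'I_N -> R -> 'rV[R]_d).
Hypothesis N_ge2 : (2 <= N)%N.
Hypothesis tb_gt0 : 0 < tb.
Hypothesis tau_range : forall t, 0 <= t -> 0 <= tau t <= tb.
Hypothesis psi_bounded : exists M, forall y z, `|psi y z| <= M.
Hypothesis psi_gt0 : forall y z, 0 < psi y z.
Hypothesis x_cont : forall i, {within `[- tb, +oo[, continuous (x i)}.
Hypothesis x_ode : forall i t, 0 < t ->
  derivable (x i) t 1 /\ 'D_1 (x i) t = hk_rhs psi tau x i t.

Definition hk_weight (l j : 'I_N) (t : R) : R :=
  (N.-1)%:R^-1 * psi (x l t) (x j (t - tau t)).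

Let K := Ksup psi.
Let wlo := psi0 psi x tb / (N.-1)%:R.

Lemma predN_gt0 : 0 < (N.-1)%:R :> R.
Proof. by rewrite ltr0n -ltnS prednK // ltnW. Qed.

Lemma hk_weight_ge0 l j t : 0 < t -> 0 <= hk_weight l j t.
Proof. by move=> _; rewrite mulr_ge0 ?invr_ge0 ?ler0n // ltW. Qed.

Lemma x_continuous_at i t : - tb < t -> {for t, continuous (x i)}.
Proof.
move=> tbt; apply: ((continuous_within_itvcyP _ _).1 (x_cont i)).1.
by rewrite in_itv /= tbt.
Qed.

Lemma hk_projection_solution v :
  consensus_solution N tau tb hk_weight (fun k s => dotv (x k s) v).
Proof.
split=> [l t /(x_continuous_at l) cx|l t t0].
  exact: (continuous_comp cx (dotv_continuous v _)).
have [dx Dx] := x_ode l t t0; have [dp ->] := is_derive_dotv v dx; split => //.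
rewrite Dx /hk_rhs dotvZl dotv_suml mulr_sumr; apply: eq_bigr => j _.
by rewrite dotvZl dotvBl mulrA.
Qed.

Lemma psi_le_Ksup y z : psi y z <= K.
Proof.
have [M psiM] := psi_bounded.
apply: le_trans (ler_norm _) _; apply: ub_le_sup; last by exists y, z.
by exists M => r [y' [z' ->]].
Qed.

Lemma Ksup_gt0 : 0 < K.
Proof. exact: lt_le_trans (psi_gt0 0 0) (psi_le_Ksup 0 0). Qed.

Lemma hk_weight_sum_le l t : 0 < t -> \sum_(j < N | j != l) hk_weight l j t <= K.
Proof.
move=> _; apply: le_trans (_ : \sum_(j < N | j != l) (N.-1)%:R^-1 * K <= _).
  by apply: ler_sum => j _; rewrite ler_wpM2l ?invr_ge0 ?ler0n ?psi_le_Ksup.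
rewrite sumr_const cardC1 card_ord -mulrnAl -mulr_natl mulfV ?mul1r //.
by rewrite gt_eqF // predN_gt0.
Qed.

Let i0 : 'I_N := Ordinal (ltnW N_ge2).
Local Notation window n := `[n%:R * tb - tb, n%:R * tb].

Lemma enorm_le_M0_init i s : - tb <= s <= 0 -> enorm (x i s) <= M0 x tb.
Proof.
move=> hs; apply: ub_le_sup; last by exists i, s; rewrite in_itv /= hs.
have bound j : exists c, forall r, - tb <= r <= 0 -> enorm (x j r) <= c.
  have sub : `[- tb, 0] `<=` `[- tb, +oo[.
    by move=> r /=; rewrite !in_itv /= andbT => /andP [].
  have cw : {within `[- tb, 0], continuous (enorm \o x j)}.
    have cj := continuous_subspaceW sub (x_cont j).
    by move=> r; exact: (continuous_comp (cj r) (enorm_continuous _)).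
  have tb_le0 : - tb <= 0 by rewrite oppr_le0 ltW.
  have [c _ cmax] := EVT_max tb_le0 cw.
  by exists (enorm (x j c)) => r hr; apply: cmax; rewrite in_itv.
have [c cub] := fin_all_exists bound.
exists (\sum_j `|c j|) => _ [j [r [hr ->]]].
rewrite in_itv /= in hr; apply: le_trans (cub j r hr) _.
rewrite (bigD1 j) //= ler_wpDr ?sumr_ge0 // ?ler_norm // => k _.
Qed.

Lemma M0_ge0 : 0 <= M0 x tb.
Proof.
apply: le_trans (enorm_ge0 (x i0 0)) _; apply: enorm_le_M0_init.
by rewrite lexx andbT oppr_le0 ltW.
Qed.

(* Each projection [s |-> <x_k(s), x_i(t)>] stays below [M0 |x_i(t)|], its bound on
   the initial history. *)
Lemma enorm_le_M0 i t : - tb <= t -> enorm (x i t) <= M0 x tb.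
Proof.
move=> tbt; have [t0|t_gt0] := leP t 0; first by apply: enorm_le_M0_init; rewrite tbt t0.
apply: ler_of_sqr_le_mul; first exact: M0_ge0.
rewrite enorm_sqr; set v := x i t.
apply: (consensus_le_propagation _ _ _ _ tb_gt0 tau_range hk_weight_ge0
  (hk_projection_solution v) (lexx 0)); last by rewrite sub0r.
move=> k s; rewrite sub0r => hs; apply: le_trans (dotv_le_enorm _ _) _.
by rewrite ler_wpM2r ?enorm_ge0 ?enorm_le_M0_init.
Qed.

Lemma psi0_ge0 : 0 <= psi0 psi x tb.
Proof.
have x0 : enorm (x i0 0) <= M0 x tb.
  by apply: enorm_le_M0_init; rewrite lexx andbT oppr_le0 ltW.
apply: lb_le_inf; first by exists (psi (x i0 0) (x i0 0)), (x i0 0), (x i0 0).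
by move=> r [y [z [_ [_ ->]]]]; exact: ltW.
Qed.

Lemma wlo_ge0 : 0 <= wlo.
Proof. by rewrite divr_ge0 ?psi0_ge0 ?ler0n. Qed.

Lemma hk_weight_ge l j t : 0 < t -> j != l -> wlo <= hk_weight l j t.
Proof.
move=> t0 _; rewrite /wlo /hk_weight [_ / _]mulrC ler_wpM2l ?invr_ge0 ?ler0n //.
apply: ge_inf; first by exists 0 => r [y [z [_ [_ ->]]]]; exact: ltW.
have /andP [tau0 taub] := tau_range t (ltW t0).
exists (x l t), (x j (t - tau t)); split; first by apply: enorm_le_M0; lra.
by split => //; apply: enorm_le_M0; have := tb_gt0; lra.
Qed.

Lemma window_lb {n r} : r \in window n -> - tb <= r.
Proof.
by rewrite in_itv /= => /andP [h _]; have := mulr_ge0 (ler0n R n) (ltW tb_gt0); lra.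
Qed.

Lemma Dn_ub n i j {s t} :
  s \in window n -> t \in window n ->
  enorm (x i s - x j t) <= Dn x tb n.
Proof.
move=> hs ht; apply: ub_le_sup; last by exists i, j, s, t.
exists (M0 x tb + M0 x tb) => _ [i' [j' [s' [t' [hs' [ht' ->]]]]]].
apply: le_trans (enormB_le _ _) _.
by apply: lerD; apply: enorm_le_M0; exact: window_lb hs' || exact: window_lb ht'.
Qed.

Lemma right_in_window n : n%:R * tb \in window n.
Proof. by rewrite in_itv /= lexx andbT gerBl ltW. Qed.

Lemma Dn_ge0 n : 0 <= Dn x tb n.
Proof.
exact: le_trans (enorm_ge0 _) (Dn_ub n i0 i0 (right_in_window n) (right_in_window n)).
Qed.

Lemma hk_window_oscillation n v : exists m M,
  (forall k r, r \in window n -> m <= dotv (x k r) v <= M) /\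
  M - m <= Dn x tb n * enorm v.
Proof.
pose P := [set y | exists k r, r \in window n /\ y = dotv (x k r) v].
have P_abs y : P y -> `|y| <= M0 x tb * enorm v.
  move=> [k [r [hr ->]]]; have xM := enorm_le_M0 k r (window_lb hr).
  rewrite ler_norml lerNl -dotvNl.
  apply/andP; split; apply: le_trans (dotv_le_enorm _ _) _;
    by rewrite ?enormN ler_wpM2r ?enorm_ge0.
have P_ub : has_ubound P.
  by exists (M0 x tb * enorm v) => y /P_abs /ler_normlP [].
have P_lb : has_lbound P.
  by exists (- (M0 x tb * enorm v)) => y /P_abs /ler_normlP []; rewrite lerNl.
have P0 : P !=set0.
  exists (dotv (x i0 (n%:R * tb)) v), i0, (n%:R * tb).
  by split => //; exact: right_in_window.
exists (inf P), (sup P); split.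
  move=> k r hr; have Pkr : P (dotv (x k r) v) by exists k, r.
  by rewrite (ge_inf P_lb Pkr) (ub_le_sup P_ub Pkr).
suff : sup P - Dn x tb n * enorm v <= inf P by lra.
apply: (lb_le_inf P0) => _ [k' [r' [hr' ->]]].
rewrite lerBlDr; apply: (ge_sup P0) => _ [k [r [hr ->]]].
rewrite -lerBlDl -dotvBl; apply: le_trans (dotv_le_enorm _ _) _.
by rewrite ler_wpM2r ?enorm_ge0 ?Dn_ub.
Qed.

Lemma hk_contraction n : Dn x tb n.+3 <= consensus_factor N tb K wlo * Dn x tb n.
Proof.
have T0 : 0 <= n%:R * tb by rewrite mulr_ge0 ?ler0n ?ltW.
have win r : r \in window n.+3 ->
    n%:R * tb + 2 * tb <= r <= n%:R * tb + 3 * tb.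
  by rewrite in_itv /= -addn3 natrD => /andP [r1 r2]; apply/andP; split; lra.
apply: ge_sup; first by exists (enorm (x i0 (n.+3%:R * tb) - x i0 (n.+3%:R * tb))),
  i0, i0, (n.+3%:R * tb), (n.+3%:R * tb); split; [|split]; rewrite ?right_in_window.
move=> _ [i [j [s [t [hs [ht ->]]]]]]; set v := x i s - x j t.
have [m [M [mM osc]]] := hk_window_oscillation n v.
have := consensus_window_contraction _ _ _ _ tb_gt0 tau_range hk_weight_ge0 _ Ksup_gt0
  hk_weight_sum_le _ wlo_ge0 hk_weight_ge _ _ _ _ (hk_projection_solution v) T0 mM
  i j s t (win s hs) (win t ht).
rewrite -dotvBl -/v -enorm_sqr => contr.
apply: ler_of_sqr_le_mul; first by rewrite mulr_ge0 ?Dn_ge0 ?consensus_factor_ge0 ?Ksup_gt0.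
apply: le_trans contr _; rewrite -mulrA ler_wpM2l ?consensus_factor_ge0 ?Ksup_gt0 //.
Qed.

Lemma hk_factorE :
  consensus_factor N tb K wlo = 1 - expR (- (K * tb)) * (1 - Cconst psi x tb).
Proof.
rewrite /consensus_factor /consensus_rate /Cconst /wlo divfK ?gt_eqF ?predN_gt0 //.
congr (_ - _ * _); rewrite /Num.max /Num.min.
by case: ifP => h; case: ifP => h'; move: h h'; do 2 case: ltP; lra.
Qed.
End HegselmannKrause.

Lemma geometric_decay (R : realDomainType) (u : nat -> R) (c : R) (k : nat) :
  0 <= c -> (forall n, u (n + k)%N <= c * u n) -> forall n, u (k * n)%N <= c ^+ n * u 0%N.
Proof.
move=> c0 step; elim=> [|n IH]; first by rewrite muln0 expr0 mul1r.
rewrite mulnS addnC exprS -mulrA; apply: le_trans (step _) _.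
by rewrite ler_wpM2l.
Qed.

Theorem mainTheorem7 (R : realType) (N d : nat) (tb : R)
  (tau : R -> R) (psi : 'rV[R]_d -> 'rV[R]_d -> R) (x : 'I_N -> R -> 'rV[R]_d) :
  (2 <= N)%N -> (1 <= d)%N -> 0 < tb ->
  {within `[0, +oo[, continuous tau} ->
  (forall t, 0 <= t -> 0 <= tau t <= tb) ->
  continuous (fun p : 'rV[R]_d * 'rV[R]_d => psi p.1 p.2) ->
  (exists M, forall y z, `|psi y z| <= M) ->
  (forall y z, 0 < psi y z) ->
  (* x is a solution: continuous on [-tb, oo), differentiable on (0, oo), satisfying the system *)
  (forall i, {within `[- tb, +oo[, continuous (x i)}) ->
  (forall i t, 0 < t -> derivable (x i) t 1 /\ 'D_1 (x i) t = hk_rhs psi tau x i t) ->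
  let C := Cconst psi x tb in
  let Ct := 1 - expR (- (Ksup psi * tb)) * (1 - C) in
  (forall n : nat, (2 <= n)%N -> Dn x tb n.+1 <= Ct * Dn x tb (n - 2)) /\
  (forall n : nat, Dn x tb (3 * n) <= Ct ^+ n * Dn x tb 0).
Proof.
move=> N2 _ tb0 _ tau_rng _ psi_bnd psi_pos x_cont x_ode C Ct.
have CtE : Ct = consensus_factor N tb (Ksup psi) (psi0 psi x tb / (N.-1)%:R).
  by rewrite (hk_factorE _ _ _ N2).
have step n : Dn x tb n.+3 <= Ct * Dn x tb n.
  rewrite CtE.
  exact: (hk_contraction _ _ _ _ N2 tb0 tau_rng psi_bnd psi_pos x_cont x_ode).
split=> [n n2|]; first by rewrite -[n in n.+1](subnK n2) addn2; exact: step.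
apply: geometric_decay => [|n]; last by rewrite addn3; exact: step.
by rewrite CtE; apply: consensus_factor_ge0 => //; exact: Ksup_gt0.
Qed.
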